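(* Let $p$ be a prime, let $P$ be a finite $p$-group, and let $T$ be a subgroup of $P$ of index $p^c$. Then for every non-negative integer $k$, \[ |\mathrm{Sub}_{p^k}(P,T)| \leq \binom{c}{k}_p . \]
   Context: For a group $R$, a subgroup $T\le R$ and an integer $k$, $\mathrm{Sub}_k(R,T)=\{H\le R : T\le H,\ [R:H]=k\}$. For a prime $p$ and non-negative integers $m,r$, the Gaussian binomial coefficient is $\binom{m}{r}_p=\prod_{i=0}^{r-1}\frac{p^{m-i}-1}{p^{i+1}-1}$. *)

From mathcomp Require Import all_boot all_order all_algebra all_fingroup all_solvable.
Set Implicit Arguments. Unset Strict Implicit. Unset Printing Implicit Defensive.
Import GRing.Theory Num.Theory.

(* Gaussian binomial coefficient binom(m, r)_p, computed in rat:
   prod_{i=0}^{r-1} (p^(m-i) - 1) / (p^(i+1) - 1).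
   For r > m the factor i = m is p^0 - 1 = 0, so the value is 0. *)
Definition gauss_binom (p m r : nat) : rat :=
  (\prod_(i < r) (((expn p (m - i))%:R - 1) / ((expn p i.+1)%:R - 1)))%R.

Definition Sub_k (gT : finGroupType) (k : nat) (R T : {group gT}) :
  {set {group gT}} :=
  [set H : {group gT} | [&& T \subset H, H \subset R & (#|R : H|)%g == k]].

From mathcomp Require Import all_boot all_order all_algebra all_fingroup all_solvable.
From mathcomp Require Import ring.
Set Implicit Arguments. Unset Strict Implicit. Unset Printing Implicit Defensive.
Import Order.TTheory GRing.Theory Num.Theory.

(* A maximal subgroup M of P containing T is normal of index p,
   and a subgroup H of index p^(k+1) containing T either lies in M, where it
   has index p^k, or meets M in a subgroup K of index p^(k+1) in M with
   [H : K] = p.  For fixed K the sets H \ M are pairwise disjoint subsets of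
   P \ M of size (p - 1)|K|, while |P \ M| = (p - 1)|K| p^(k+1); so K arises
   from at most p^(k+1) such H.  This gives
     |Sub_{p^(k+1)}(P,T)| <= |Sub_{p^k}(M,T)| + p^(k+1) |Sub_{p^(k+1)}(M,T)|,
   the same recursion as the q-Pascal rule
     binom(c+1, k+1)_p = binom(c, k)_p + p^(k+1) binom(c, k+1)_p. *)

Section GaussBinomial.
Local Open Scope ring_scope.
Variable p : nat.

Lemma gauss_binom0 m : gauss_binom p m 0 = 1.
Proof. by rewrite /gauss_binom big_ord0. Qed.

Lemma gauss_binom_eq0 m k : (m < k)%N -> gauss_binom p m k = 0.
Proof.
move=> lt_mk; rewrite /gauss_binom (bigD1 (Ordinal lt_mk)) //=.
by rewrite subnn expn0 subrr mul0r mul0r.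
Qed.

Lemma gauss_binomSS m k : gauss_binom p m.+1 k.+1 =
  ((p ^ m.+1)%N%:R - 1) / ((p ^ k.+1)%N%:R - 1) * gauss_binom p m k.
Proof.
rewrite /gauss_binom !prodf_div big_ord_recl big_ord_recr /= subn0.
under eq_bigr do rewrite /bump add1n subSS.
by rewrite invfM; ring.
Qed.

Lemma gauss_binom_pascal m k : (1 < p)%N ->
  gauss_binom p m.+1 k.+1 =
  gauss_binom p m k + (p ^ k.+1)%N%:R * gauss_binom p m k.+1.
Proof.
move=> p_gt1; have [lt_mk | le_km] := ltnP m k.
  by rewrite !gauss_binom_eq0 ?mulr0 ?addr0 // ltnW.
rewrite gauss_binomSS /gauss_binom big_ord_recr /= -/(gauss_binom p m k).
have -> : (p ^ m.+1 = p ^ k.+1 * p ^ (m - k))%N by rewrite -expnD addSn subnKC.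
have q1_neq0 : (p ^ k.+1)%N%:R - 1 != 0 :> rat.
  by rewrite subr_eq0 pnatr_eq1 -(expn0 p) eqn_exp2l.
by rewrite natrM; field.
Qed.

End GaussBinomial.

Lemma leq_sum_card_disjoint (I T : finType) (J : {pred I}) (F : I -> {set T})
    (A : {set T}) :
    (forall i, i \in J -> F i \subset A) ->
    (forall i j x, i \in J -> j \in J -> x \in F i -> x \in F j -> i = j) ->
  (\sum_(i in J) #|F i| <= #|A|)%N.
Proof.
move=> sFA inj_F.
have cardE (B : {set T}) : #|B| = (\sum_x (x \in B))%N.
  by rewrite -sum1_card big_mkcond.
rewrite cardE (eq_bigr _ (fun i _ => cardE (F i))) exchange_big /=.
apply: leq_sum => x _; case: (boolP (x \in A)) => [_ | xA]; last first.
  by rewrite big1 // => i /sFA /subsetP sFiA; rewrite (contraNF (@sFiA x) xA).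
rewrite -big_mkcondr sum1dep_card /=; apply/card_le1_eqP => i j.
by rewrite !inE => /andP[Ji xFi] /andP[Jj xFj]; apply: (inj_F j i x).
Qed.

Section SubgroupCounting.
Variable gT : finGroupType.
Implicit Types P M H K T : {group gT}.
Local Open Scope group_scope.
Local Open Scope nat_scope.

Lemma in_Sub_k n P T H :
  (H \in Sub_k n P T) = [&& T \subset H, H \subset P & #|P : H| == n].
Proof. by rewrite inE. Qed.

Lemma card_Sub_k1_le1 P T : #|Sub_k 1 P T| <= 1.
Proof.
apply/card_le1_eqP => H1 H2; rewrite !in_Sub_k.
move=> /and3P[_ sH1P /eqP/(index1g sH1P) eH1].
move=> /and3P[_ sH2P /eqP/(index1g sH2P) eH2].
by apply/val_inj; rewrite /= eH1 eH2.
Qed.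

Lemma Sub_k_eq0 n P T : ~~ (n %| #|P : T|) -> Sub_k n P T = set0.
Proof.
move=> n_ndvd; apply/setP => H; rewrite in_Sub_k inE.
apply: contraNF n_ndvd => /and3P[sTH sHP /eqP <-].
by rewrite -(Lagrange_index sHP sTH) dvdn_mulr.
Qed.

Lemma Sub_k_restrict n P M T H : M \subset P -> H \subset M ->
  H \in Sub_k (#|P : M| * n) P T -> H \in Sub_k n M T.
Proof.
move=> sMP sHM; rewrite !in_Sub_k sHM => /and3P[-> _].
by rewrite -(Lagrange_index sMP sHM) eqn_pmul2l ?indexg_gt0.
Qed.

Lemma indexgI_normal_maximal P M H : M <| P -> maximal M P ->
  H \subset P -> ~~ (H \subset M) -> #|H : H :&: M| = #|P : M|.
Proof.
move=> nMP maxM sHP nsHM.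
by rewrite indexgI -indexMg (mulg_normal_maximal nMP maxM sHP nsHM).
Qed.

Lemma indexgI_swap P M H : M \subset P -> H \subset P ->
  #|H : H :&: M| = #|P : M| -> #|M : H :&: M| = #|P : H|.
Proof.
move=> sMP sHP iHM; apply/eqP; rewrite -(eqn_pmul2l (indexg_gt0 P M)).
rewrite Lagrange_index ?subsetIr // -(Lagrange_index sHP (subsetIl H M)) iHM.
by rewrite mulnC.
Qed.

Lemma setI_Sub_k_normal_maximal n P M T H : M <| P -> maximal M P ->
    T \subset M -> H \in Sub_k n P T -> ~~ (H \subset M) ->
  (H :&: M)%G \in Sub_k n M T.
Proof.
move=> nMP maxM sTM; rewrite !in_Sub_k /= subsetI sTM subsetIr andbT.
move=> /and3P[-> sHP /eqP <-] nsHM; apply/eqP.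
have iHM := indexgI_normal_maximal nMP maxM sHP nsHM.
exact: indexgI_swap (normal_sub nMP) sHP iHM.
Qed.

Lemma maximal_sub_overgroup K H1 H2 x : maximal K H1 -> K \subset H2 ->
  x \in H1 :\: K -> x \in H2 -> H1 \subset H2.
Proof.
move=> /maxgroupP[/proper_sub sKH1 maxK] sKH2 /setDP[xH1 xnK] xH2.
have [ltH12 | ] := boolP ((H1 :&: H2)%G \proper H1).
  have eK12 : H1 :&: H2 = K by apply: maxK ltH12 _; rewrite subsetI sKH1.
  by case/negP: xnK; rewrite -eK12 inE xH1.
by rewrite properE subsetIl /= negbK => /subset_trans->; rewrite ?subsetIr.
Qed.

Lemma card_prime_index_overgroups_le P M K : M \subset P -> prime #|P : M| ->
    K \subset M ->
  #|[set H : {group gT} |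
      [&& H \subset P, H :&: M == K & #|H : K| == #|P : M|]]| <= #|M : K|.
Proof.
move=> sMP prime_q sKM; set q := #|P : M|; set F := [set H | _].
have inF H : H \in F -> [/\ H \subset P, H :&: M = K & #|H : K| = q].
  by rewrite inE => /and3P[? /eqP ? /eqP ?].
have card_outside H : H \in F -> #|H :\: M| = (q - 1) * #|K|.
  case/inF => _ eK iK; have sKH : K \subset H by rewrite -eK subsetIl.
  by rewrite cardsD eK -(Lagrange sKH) iK mulnBl mul1n mulnC.
have sub_F H1 H2 x : H1 \in F -> H2 \in F -> x \in H1 :\: M -> x \in H2 ->
    H1 \subset H2.
  case/inF=> _ eK1 iK1 /inF[_ eK2 _] xH1M xH2.
  have sKH1 : K \subset H1 by rewrite -eK1 subsetIl.
  apply: (maximal_sub_overgroup (x := x)) xH2.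
  - by apply: (p_index_maximal sKH1); rewrite iK1.
  - by rewrite -eK2 subsetIl.
  - exact: subsetP (setDS H1 sKM) x xH1M.
have : \sum_(H in F) #|H :\: M| <= #|P :\: M|.
  apply: leq_sum_card_disjoint => [H /inF[sHP _ _] | H1 H2 x F1 F2 xH1M xH2M].
    exact: setSD.
  have [xH1 _] := setDP xH1M; have [xH2 _] := setDP xH2M.
  by apply/val_inj/eqP; rewrite eqEsubset (sub_F H1 H2 x) // (sub_F H2 H1 x).
rewrite (eq_bigr _ card_outside) sum_nat_const cardsD (setIidPr sMP).
have -> : #|P| - #|M| = #|M : K| * ((q - 1) * #|K|).
  rewrite -(Lagrange sMP) -(Lagrange sKM) -/q mulnBl mul1n mulnBr.
  by congr (_ - _); ring.
by rewrite leq_pmul2r // muln_gt0 subn_gt0 prime_gt1 ?cardG_gt0.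
Qed.

Lemma card_Sub_k_normal_prime_index_le n P M T : M <| P -> prime #|P : M| ->
    T \subset M ->
  #|Sub_k (#|P : M| * n) P T|
    <= #|Sub_k n M T| + #|P : M| * n * #|Sub_k (#|P : M| * n) M T|.
Proof.
move=> nMP prime_q sTM; have sMP := normal_sub nMP.
have maxM := p_index_maximal sMP prime_q.
set q := #|P : M|; set S' := Sub_k (q * n) M T.
rewrite -sum1_card (bigID (fun H => H \subset M)) /=; apply: leq_add.
  rewrite sum1dep_card; apply: subset_leq_card; apply/subsetP => H.
  by rewrite inE => /andP[SH sHM]; apply: Sub_k_restrict sMP sHM SH.
rewrite (partition_big (fun H => (H :&: M)%G) [in S']); last first.
  move=> H /andP[SH nsHM].
  exact: setI_Sub_k_normal_maximal nMP maxM sTM SH nsHM.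
rewrite [_ * #|S'|]mulnC -sum_nat_const; apply: leq_sum => K S'K.
move: S'K; rewrite in_Sub_k => /and3P[_ sKM /eqP <-].
rewrite sum1dep_card.
apply: leq_trans (card_prime_index_overgroups_le sMP prime_q sKM).
apply: subset_leq_card; apply/subsetP => H.
rewrite !inE => /andP[/andP[SH nsHM] /eqP eK].
have sHP : H \subset P by case/and3P: SH.
by rewrite sHP -eK /= eqxx (indexgI_normal_maximal nMP maxM sHP nsHM) eqxx.
Qed.

End SubgroupCounting.

Theorem proposition2p1 (gT : finGroupType) (p : nat) (P T : {group gT}) (c : nat) :
  prime p -> (p.-group P)%g -> T \subset P -> (#|P : T|)%g = (p ^ c)%N ->
  forall k : nat, ((#|Sub_k (p ^ k) P T|)%:R <= gauss_binom p c k :> rat)%R.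
Proof.
move=> pr_p; have p_gt1 := prime_gt1 pr_p.
elim: c P T => [|c IH] P T pP sTP iPT [|k];
  rewrite ?gauss_binom0 ?lern1 ?card_Sub_k1_le1 //.
  rewrite Sub_k_eq0 ?cards0 ?gauss_binom_eq0 //.
  by rewrite iPT dvdn1 -(expn0 p) eqn_exp2l.
have [eTP | [M maxM sTM]] := maximal_exists sTP.
  by move: iPT; rewrite eTP indexgg => /esym/eqP; rewrite -(expn0 p) eqn_exp2l.
have nMP := p_maximal_normal pP maxM; have iPM := p_maximal_index pP maxM.
have sMP := normal_sub nMP.
have iMT : #|M : T|%g = (p ^ c)%N.
  apply/eqP; rewrite -(eqn_pmul2l (prime_gt0 pr_p)) -expnS -iPT -{1}iPM.
  by rewrite Lagrange_index.
have IH_M := IH M T (pgroupS sMP pP) sTM iMT.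
have card_rec : (#|Sub_k (p ^ k.+1) P T|
    <= #|Sub_k (p ^ k) M T| + p ^ k.+1 * #|Sub_k (p ^ k.+1) M T|)%N.
  have := card_Sub_k_normal_prime_index_le (p ^ k) nMP.
  by rewrite iPM -expnS; apply.
move: card_rec; rewrite -(ler_nat rat) natrD natrM => /le_trans; apply.
rewrite gauss_binom_pascal //.
by apply: lerD (IH_M k) (ler_wpM2l (ler0n _ _) (IH_M k.+1)).
Qed.
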